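(* Let $P$ be a program in normal form over a propositional signature $\Sigma$, and $q\in\Sigma$. If $P$ is $q$-forgettable, then $f_{SP}(P,q)$ is constructed using only the derivation rules (1a), (1b) and (4) (besides the rules in $R$); that is, $f_{SP}(P,q)=NF(P''')$, where $P'''$ consists of the rules of $R$ together with all rules produced by (1a), (1b) and (4).
   Context: A program over $\Sigma$ is a finite set of rules $r$ of the form $a_1\vee\dots\vee a_k\leftarrow b_1,\dots,b_l,\ not\,c_1,\dots,not\,c_m,\ not\,not\,d_1,\dots,not\,not\,d_n$ with atoms in $\Sigma$; write $H(r)=\{a_i\}$, $B^+(r)=\{b_i\}$, $B^-(r)=\{c_i\}$, $B^{--}(r)=\{d_i\}$, $B(r)=B^+(r)\cup\{not\,c: c\in B^-(r)\}\cup\{not\,not\,d:d\in B^{--}(r)\}$ (elements of $B(r)$ are literals); a rule is written $H(r)\leftarrow B(r)$. $\Sigma(r)$ is the set of atoms occurring in $r$. Normal form: $r$ is tautological if $H(r)\cap B^+(r)\ne\emptyset$ or $B^+(r)\cap B^-(r)\ne\emptyset$ or $B^-(r)\cap B^{--}(r)\ne\emptyset$; $r\in P$ is minimal in $P$ if no $r'\in P$ has ($H(r')\subseteq H(r)$ and $B(r')\subsetneq B(r)$) or ($H(r')\subsetneq H(r)$ and $B(r')\subseteq B(r)$). $P$ is in normal form if (i) for every atom $a$ and $r\in P$ at most one of $a$, $not\,a$, $not\,not\,a$ is in $B(r)$; (ii) if $a\in H(r)$ then neither $a$ nor $not\,a$ is in $B(r)$; (iii) every rule is minimal in $P$. $NF(P)$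 is obtained by: 1. removing tautological rules; 2. removing from $B^{--}(r)$ atoms in $B^+(r)$; 3. removing from $H(r)$ atoms in $B^-(r)$; 4. removing rules not minimal in the resulting program. A self-cycle on $q$ is a rule $r$ with $q\in H(r)$ and $q\in B^{--}(r)$. A program $P$ in normal form is $q$-forgettable if at least one holds: (a) every rule of $P$ in which $q$ occurs is a self-cycle on $q$; (b) $P$ contains the fact $q\leftarrow$; (c) $P$ contains no self-cycle on $q$. Notation: for a set $S$ of literals, $not\,(S)=\{not\,s:s\in S\}$, $not\,not\,(S)=\{not\,not\,s:s\in S\}$, simplifying $not\,not\,not\,p=not\,p$ and $not\,not\,not\,not\,p=not\,not\,p$. $B^{\setminus q}(r)=B(r)\setminus\{q,not\,q,not\,not\,q\}$, $H^{\setminus q}(r)=H(r)\setminus\{q\}$. For a set of rules $Q$, $D_q(Q)$ is the set of all sets $not\,(\{l_1,\dots,l_m\})\cup not\,not\,(\{l_{m+1},\dots,l_n\})$ where $\langle\{r_1,\dots,r_m\},\{r_{m+1},\dots,r_n\}\rangle$ is a partition of $Q$ (parts possibly empty), $l_i\in B^{\setminus q}(r_i)$ for $i\le m$, $l_j\in H^{\setminus q}(r_j)$ for $j>m$ (so $D_q(\emptyset)=\{\emptyset\}$). The operator $f_{SP}$: let $P'=NF(P)$, $R=\{r\in P': q\notin\Sigma(r)\}$, $R_0=\{r\in P':q\in B(r)\}$, $R_1=\{r\in P': not\,q\in B(r)\}$, $R_2=\{r\in P': not\,not\,q\in B(r), q\notin H(r)\}$, $R_3=\{r\in P': not\,not\,q\in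 B(r), q\in H(r)\}$, $R_4=\{r\in P': not\,not\,q\notin B(r), q\in H(r)\}$. $P''$ consists of: every $r\in R$; and (1a) for $r_0\in R_0$, $r_4\in R_4$: $H(r_0)\cup H^{\setminus q}(r_4)\leftarrow B^{\setminus q}(r_0)\cup B(r_4)$; (2a) for $r_0\in R_0$, $r_3\in R_3$, $r'\in R_1\cup R_4$: $H(r_0)\cup H^{\setminus q}(r_3)\leftarrow B^{\setminus q}(r_0)\cup B^{\setminus q}(r_3)\cup not\,(H^{\setminus q}(r'))\cup not\,not\,(B^{\setminus q}(r'))$; (3a) for $r_0\in R_0$, $r_3\in R_3$, $h\in H(r_0)$, $D\in D_q((R_0\cup R_2)\setminus\{r_0\})$: $H(r_0)\leftarrow B^{\setminus q}(r_0)\cup\{not\,not\,h\}\cup D\cup B^{\setminus q}(r_3)\cup not\,(H^{\setminus q}(r_3))$; (1b) for $r_2\in R_2$, $r_4\in R_4$: $H(r_2)\leftarrow B^{\setminus q}(r_2)\cup not\,(H^{\setminus q}(r_4))\cup not\,not\,(B(r_4))$; (2b) for $r_2\in R_2$, $r_3\in R_3$, $r'\in R_1\cup R_4$: $H(r_2)\leftarrow B^{\setminus q}(r_2)\cup not\,(H^{\setminus q}(r_3)\cup H^{\setminus q}(r'))\cup not\,not\,(B^{\setminus q}(r_3)\cup B^{\setminus q}(r'))$; (3b) for $r_2\in R_2$, $r_3\in R_3$, $h\in H(r_2)$, $D\in D_q((R_0\cup R_2)\setminus\{r_2\})$: $H(r_2)\leftarrow B^{\setminus q}(r_2)\cup not\,(H^{\setminus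 q}(r_3))\cup not\,not\,(B^{\setminus q}(r_3)\cup\{h\})\cup D$; (4) for $r'\in R_1\cup R_4$, $D\in D_q(R_3\cup R_4)$ with $D\cap not\,(B^{\setminus q}(r'))=\emptyset$: $H^{\setminus q}(r')\leftarrow B^{\setminus q}(r')\cup D$; (5) for $r'\in R_1\cup R_4$, $r_3\in R_3$, $r\in R_0\cup R_2$, $D\in D_q(R_4)$ with $D\cap not\,(B^{\setminus q}(r'))=\emptyset$: $H^{\setminus q}(r')\leftarrow B^{\setminus q}(r')\cup not\,(H(r)\cup H^{\setminus q}(r_3))\cup not\,not\,(B^{\setminus q}(r)\cup B^{\setminus q}(r_3))\cup D$; (6) for $r'\in R_1\cup R_4$, $r_3\in R_3$, $h\in H^{\setminus q}(r')$, $D\in D_q((R_1\cup R_4)\setminus\{r'\})$: $H^{\setminus q}(r')\leftarrow B^{\setminus q}(r')\cup not\,(H^{\setminus q}(r_3))\cup not\,not\,(B^{\setminus q}(r_3)\cup\{h\})\cup D$; (7) for $r_0\in R_0$, $r_3,r_3'\in R_3$ with $r_3\ne r_3'$, $D\in D_q((R_0\cup R_2)\setminus\{r_0\})$, $h\in H(r_0)$: $H(r_0)\cup H^{\setminus q}(r_3)\leftarrow B^{\setminus q}(r_0)\cup B^{\setminus q}(r_3)\cup not\,(H^{\setminus q}(r_3'))\cup not\,not\,(B^{\setminus q}(r_3')\cup\{h\})\cup D$. Then $f_{SP}(P,q)=NF(P'')$. *)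

From HB Require Import structures.
From mathcomp Require Import all_boot.
From mathcomp Require Import finmap.

Set Implicit Arguments.
Unset Strict Implicit.
Unset Printing Implicit Defensive.

Local Open Scope fset_scope.

Section Programs.
Variable A : choiceType.

(* body literals: b, not c, not not d *)
Inductive lit := Pos of A | Neg of A | NNeg of A.

Definition lit_to (l : lit) : A + (A + A) :=
  match l with Pos a => inl a | Neg a => inr (inl a) | NNeg a => inr (inr a) end.
Definition lit_of (s : A + (A + A)) : lit :=
  match s with inl a => Pos a | inr (inl a) => Neg a | inr (inr a) => NNeg a end.
Lemma lit_toK : cancel lit_to lit_of. Proof. by case. Qed.
HB.instance Definition _ := Equality.copy lit (can_type lit_toK).
HB.instance Definition _ := Choice.copy lit (can_type lit_toK).

(* a rule  H(r) <- B(r), with B(r) a finite set of literals *)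
Definition rule := ({fset A} * {fset lit})%type.
Definition program := {fset rule}.

Definition H (r : rule) : {fset A} := r.1.
Definition B (r : rule) : {fset lit} := r.2.

Definition atom_of (l : lit) : A := match l with Pos a | Neg a | NNeg a => a end.
Definition is_pos l := if l is Pos _ then true else false.
Definition is_neg l := if l is Neg _ then true else false.
Definition is_nneg l := if l is NNeg _ then true else false.

Definition Bp (r : rule) : {fset A} := [fset atom_of l | l in B r & is_pos l].
Definition Bn (r : rule) : {fset A} := [fset atom_of l | l in B r & is_neg l].
Definition Bnn (r : rule) : {fset A} := [fset atom_of l | l in B r & is_nneg l].

Definition occurs (a : A) (r : rule) : bool :=
  [|| a \in H r, a \in Bp r, a \in Bn r | a \in Bnn r].

Definition tautological (r : rule) : bool :=
  [|| (H r `&` Bp r) != fset0, (Bp r `&` Bn r) != fset0 | (Bn r `&` Bnn r) != fset0].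

Definition minimal_in (P : program) (r : rule) : bool :=
  ~~ [exists r' : P, ((H (val r') `<=` H r) && (B (val r') `<` B r))
                   || ((H (val r') `<` H r) && (B (val r') `<=` B r))].

Definition normal_form (P : program) : Prop :=
  [/\ (forall a r, r \in P ->
          ((Pos a \in B r) + (Neg a \in B r) + (NNeg a \in B r) <= 1)%N),
      (forall a r, r \in P -> a \in H r -> Pos a \notin B r /\ Neg a \notin B r)
    & (forall r, r \in P -> minimal_in P r)].

Definition nf_step2 (r : rule) : rule :=
  (H r, [fset l in B r | ~~ (is_nneg l && (atom_of l \in Bp r))]).
Definition nf_step3 (r : rule) : rule :=
  ([fset a in H r | a \notin Bn r], B r).
Definition NF (P : program) : program :=
  let P1 := [fset r in P | ~~ tautological r] in
  let P2 := [fset nf_step2 r | r in P1] in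
  let P3 := [fset nf_step3 r | r in P2] in
  [fset r in P3 | minimal_in P3 r].

Definition self_cycle (q : A) (r : rule) : bool := (q \in H r) && (NNeg q \in B r).

Definition forgettable (q : A) (P : program) : Prop :=
  [\/ (forall r, r \in P -> occurs q r -> self_cycle q r),
      (([fset q], fset0) : rule) \in P
    | (forall r, r \in P -> ~~ self_cycle q r)].

(* not l, with not not not p = not p *)
Definition lnot (l : lit) : lit :=
  match l with Pos a => Neg a | Neg a => NNeg a | NNeg a => Neg a end.
(* not not l, with not not not p = not p and not not not not p = not not p *)
Definition lnotnot (l : lit) : lit :=
  match l with Pos a => NNeg a | Neg a => Neg a | NNeg a => NNeg a end.

Definition pos_set (S : {fset A}) : {fset lit} := [fset Pos a | a in S].
Definition not_set (S : {fset lit}) : {fset lit} := [fset lnot l | l in S].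
Definition notnot_set (S : {fset lit}) : {fset lit} := [fset lnotnot l | l in S].

Variable q : A.

Definition Bq (r : rule) : {fset lit} := B r `\` [fset Pos q; Neg q; NNeg q].
Definition Hq (r : rule) : {fset A} := H r `\ q.

(* the literals that rule r may contribute to an element of D_q:
   not l with l in B^{\q}(r) (r in the first part of the partition), or
   not not l with l in H^{\q}(r) (r in the second part) *)
Definition Dcand (r : rule) : {fset lit} :=
  not_set (Bq r) `|` notnot_set (pos_set (Hq r)).

Fixpoint Dq_seq (s : seq rule) : {fset {fset lit}} :=
  match s with
  | [::] => [fset fset0]
  | r :: s' => [fset D `|` [fset c] | D in Dq_seq s', c in Dcand r]
  end.

(* D_q(Q): all sets obtained from a partition of Q and a choice of literals *)
Definition Dq (Q : program) : {fset {fset lit}} := Dq_seq Q.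

Definition mkrule (h : {fset A}) (b : {fset lit}) : rule := (h, b).

Section Op.
Variable P : program.

Definition P' := NF P.
Definition Rq  := [fset r in P' | ~~ occurs q r].
Definition R0 := [fset r in P' | Pos q \in B r].
Definition R1 := [fset r in P' | Neg q \in B r].
Definition R2 := [fset r in P' | (NNeg q \in B r) && (q \notin H r)].
Definition R3 := [fset r in P' | (NNeg q \in B r) && (q \in H r)].
Definition R4 := [fset r in P' | (NNeg q \notin B r) && (q \in H r)].
Definition R14 := R1 `|` R4.
Definition R02 := R0 `|` R2.

Definition rules1a : program :=
  \bigcup_(r0 <- R0) \bigcup_(r4 <- R4)
    [fset mkrule (H r0 `|` Hq r4) (Bq r0 `|` B r4)].

Definition rules2a : program :=
  \bigcup_(r0 <- R0) \bigcup_(r3 <- R3) \bigcup_(r' <- R14)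
    [fset mkrule (H r0 `|` Hq r3)
       (Bq r0 `|` Bq r3 `|` not_set (pos_set (Hq r')) `|` notnot_set (Bq r'))].

Definition rules3a : program :=
  \bigcup_(r0 <- R0) \bigcup_(r3 <- R3) \bigcup_(h <- H r0)
  \bigcup_(D <- Dq (R02 `\ r0))
    [fset mkrule (H r0)
       (Bq r0 `|` [fset NNeg h] `|` D `|` Bq r3 `|` not_set (pos_set (Hq r3)))].

Definition rules1b : program :=
  \bigcup_(r2 <- R2) \bigcup_(r4 <- R4)
    [fset mkrule (H r2)
       (Bq r2 `|` not_set (pos_set (Hq r4)) `|` notnot_set (B r4))].

Definition rules2b : program :=
  \bigcup_(r2 <- R2) \bigcup_(r3 <- R3) \bigcup_(r' <- R14)
    [fset mkrule (H r2)
       (Bq r2 `|` not_set (pos_set (Hq r3 `|` Hq r'))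
              `|` notnot_set (Bq r3 `|` Bq r'))].

Definition rules3b : program :=
  \bigcup_(r2 <- R2) \bigcup_(r3 <- R3) \bigcup_(h <- H r2)
  \bigcup_(D <- Dq (R02 `\ r2))
    [fset mkrule (H r2)
       (Bq r2 `|` not_set (pos_set (Hq r3))
              `|` notnot_set (Bq r3 `|` [fset Pos h]) `|` D)].

Definition rules4 : program :=
  \bigcup_(r' <- R14) \bigcup_(D <- Dq (R3 `|` R4) | D `&` not_set (Bq r') == fset0)
    [fset mkrule (Hq r') (Bq r' `|` D)].

Definition rules5 : program :=
  \bigcup_(r' <- R14) \bigcup_(r3 <- R3) \bigcup_(r <- R02)
  \bigcup_(D <- Dq R4 | D `&` not_set (Bq r') == fset0)
    [fset mkrule (Hq r')
       (Bq r' `|` not_set (pos_set (H r `|` Hq r3))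
              `|` notnot_set (Bq r `|` Bq r3) `|` D)].

Definition rules6 : program :=
  \bigcup_(r' <- R14) \bigcup_(r3 <- R3) \bigcup_(h <- Hq r')
  \bigcup_(D <- Dq (R14 `\ r'))
    [fset mkrule (Hq r')
       (Bq r' `|` not_set (pos_set (Hq r3))
              `|` notnot_set (Bq r3 `|` [fset Pos h]) `|` D)].

Definition rules7 : program :=
  \bigcup_(r0 <- R0) \bigcup_(r3 <- R3) \bigcup_(r3' <- R3 | r3 != r3')
  \bigcup_(D <- Dq (R02 `\ r0)) \bigcup_(h <- H r0)
    [fset mkrule (H r0 `|` Hq r3)
       (Bq r0 `|` Bq r3 `|` not_set (pos_set (Hq r3'))
              `|` notnot_set (Bq r3' `|` [fset Pos h]) `|` D)].

Definition P2 : program :=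
  Rq `|` rules1a `|` rules2a `|` rules3a `|` rules1b `|` rules2b `|` rules3b
     `|` rules4 `|` rules5 `|` rules6 `|` rules7.

Definition P3 : program := Rq `|` rules1a `|` rules1b `|` rules4.

End Op.

Definition fSP (P : program) : program := NF (P2 P).

End Programs.

From HB Require Import structures.
From mathcomp Require Import all_boot.
From mathcomp Require Import finmap.

Set Implicit Arguments.
Unset Strict Implicit.
Unset Printing Implicit Defensive.
Local Open Scope fset_scope.

(* Every derivation rule of f_SP other than (1a), (1b) and (4) draws one of its
   premises from R_3, the self-cycles on q of NF(P), and NF(P) = P for a program
   in normal form.  Under (c) there are no self-cycles; under (b) the fact q <-
   would make every self-cycle non-minimal.  Under (a) R_0, R_1, R_2 and R_4 are
   empty (a self-cycle mentions q only as a head atom and as not not q), so every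
   derivation rule, (1a), (1b) and (4) included, contributes nothing. *)

Lemma fset_sep_eq0 (T : choiceType) (X : {fset T}) (c : pred T) :
  (forall x, x \in X -> ~~ c x) -> [fset x in X | c x] = fset0.
Proof.
move=> Xc; apply/fsetP => x; rewrite !inE.
by apply/negbTE/negP => /andP[/Xc/negP].
Qed.

Section Literals.
Variable A : choiceType.
Implicit Types (r : rule A) (a : A).

Lemma in_atoms_of_kind r (kind : pred (lit A)) (mk : A -> lit A) a :
    cancel mk (@atom_of A) -> (forall l, kind l -> l = mk (atom_of l)) ->
    kind (mk a) ->
  (a \in [fset atom_of l | l in B r & kind l]) = (mk a \in B r).
Proof.
move=> mkK kindE kind_mk; apply/imfsetP/idP => [[l]|mkB].
  by rewrite inE => /andP[lB /kindE lE] ->; rewrite -lE.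
by exists (mk a); rewrite ?inE ?mkB ?kind_mk ?mkK.
Qed.

Lemma in_Bp r a : (a \in Bp r) = (Pos a \in B r).
Proof. by apply: in_atoms_of_kind => // -[]. Qed.
Lemma in_Bn r a : (a \in Bn r) = (Neg a \in B r).
Proof. by apply: in_atoms_of_kind => // -[]. Qed.
Lemma in_Bnn r a : (a \in Bnn r) = (NNeg a \in B r).
Proof. by apply: in_atoms_of_kind => // -[]. Qed.
End Literals.

Section NormalForm.
Variables (A : choiceType) (P : program A).
Hypothesis nP : normal_form P.
Implicit Types (r : rule A) (a : A) (l : lit A).

Lemma nf_lit_inj r l1 l2 : r \in P -> l1 \in B r -> l2 \in B r ->
  atom_of l1 = atom_of l2 -> l1 = l2.
Proof.
case: nP => count_lit _ _ rP.
case: l1 => a; case: l2 => b h1 h2 /= eab; subst b => //;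
  by have := count_lit a r rP; rewrite h1 h2 ?orbT /= ?addnS ?addSn.
Qed.

Lemma nf_not_tautological r : r \in P -> ~~ tautological r.
Proof.
move=> rP; rewrite /tautological !fsetI_eq0 !negb_or !negbK.
apply/and3P; split; apply/fdisjointP => a; rewrite ?in_Bp ?in_Bn ?in_Bnn.
- by case: nP => _ /(_ a r rP) head_lits _ /head_lits[].
- by move=> pB; apply/negP => /(nf_lit_inj rP pB) /(_ erefl).
- by move=> nB; apply/negP => /(nf_lit_inj rP nB) /(_ erefl).
Qed.

Lemma nf_step2_id r : r \in P -> nf_step2 r = r.
Proof.
move=> rP; case: r rP => h b rP; congr pair; apply/fsetP => l; rewrite !inE /=.
case lb: (l \in b) => //=; case: l lb => //= a nB; rewrite in_Bp; apply/negP.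
by move/(nf_lit_inj rP nB)/(_ erefl).
Qed.

Lemma nf_step3_id r : r \in P -> nf_step3 r = r.
Proof.
move=> rP; case: r rP => h b rP; congr pair; apply/fsetP => a; rewrite !inE /=.
case ah: (a \in h) => //=; rewrite in_Bn.
by case: nP => _ /(_ a _ rP ah) [].
Qed.

Lemma NF_id : NF P = P.
Proof.
have imfset_id (f : rule A -> rule A) : {in P, f =1 id} -> [fset f r | r in P] = P.
  move=> fid; apply/fsetP => r; apply/imfsetP/idP => [[x /= xP ->]|rP].
    by rewrite fid.
  by exists r; rewrite ?fid.
rewrite /NF; have -> : [fset r in P | ~~ tautological r] = P.
  apply/fsetP => r; rewrite !inE; case rP: (r \in P) => //=.
  by rewrite nf_not_tautological.
rewrite (imfset_id _ nf_step2_id) (imfset_id _ nf_step3_id).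
apply/fsetP => r; rewrite !inE; case rP: (r \in P) => //=.
by case: nP => _ _ /(_ r rP).
Qed.
End NormalForm.

Section DerivationRules.
Variables (A : choiceType) (q : A) (P : program A).

Lemma P2_eq_P3_R3_eq0 : R3 q P = fset0 -> P2 q P = P3 q P.
Proof.
move=> R3_eq0; rewrite /P2 /P3 /rules2a /rules3a /rules2b /rules3b /rules5
  /rules6 /rules7 R3_eq0.
rewrite ![\big[_/_]_(_ <- _) _]big1 ?fsetU0 // => *; exact: big_seq_fset0.
Qed.

Lemma P2_eq_P3_R0_R2_R14_eq0 :
  R0 q P = fset0 -> R2 q P = fset0 -> R14 q P = fset0 -> P2 q P = P3 q P.
Proof.
move=> R0_eq0 R2_eq0 R14_eq0.
rewrite /P2 /P3 /rules1a /rules2a /rules3a /rules1b /rules2b /rules3b /rules4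
  /rules5 /rules6 /rules7 R0_eq0 R2_eq0 R14_eq0.
by rewrite !big_seq_fset0 !fsetU0.
Qed.
End DerivationRules.

Section Forgettable.
Variables (A : choiceType) (q : A) (P : program A).
Hypothesis nP : normal_form P.
Implicit Types (r : rule A).

Lemma R3_eq0 : (forall r, r \in P -> ~~ self_cycle q r) -> R3 q P = fset0.
Proof.
move=> no_cycle; rewrite /R3 /P' NF_id //; apply: fset_sep_eq0 => r /no_cycle.
by rewrite /self_cycle andbC.
Qed.

Lemma fact_no_self_cycle r :
  ([fset q], fset0) \in P -> r \in P -> ~~ self_cycle q r.
Proof.
move=> factP rP; apply/negP => /andP[qH nqB].
case: nP => _ _ /(_ r rP) /existsP; apply; exists [` factP]; apply/orP; left.
by rewrite /H /B /= fsub1set qH fproper0; apply/fset0Pn; exists (NNeg q).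
Qed.

Lemma only_self_cycles_R_eq0 :
    (forall r, r \in P -> occurs q r -> self_cycle q r) ->
  [/\ R0 q P = fset0, R2 q P = fset0 & R14 q P = fset0].
Proof.
move=> cycle; rewrite /R0 /R2 /R14 /R1 /R4 /P' NF_id //.
have cycleP r : r \in P -> occurs q r -> q \in H r /\ NNeg q \in B r.
  by move=> rP /(cycle r rP)/andP.
split; rewrite ?fset_sep_eq0 ?fsetU0 // => r rP; apply/negP.
- move=> pqB; have /(cycleP r rP)[qH _] : occurs q r.
    by rewrite /occurs in_Bp pqB orbT.
  by case: nP => _ /(_ q r rP qH) [/negP].
- move=> /andP[nnqB /negP]; apply.
  by have /(cycleP r rP)[] : occurs q r by rewrite /occurs in_Bnn nnqB !orbT.
- move=> /andP[/negP nnqB qH]; apply: nnqB.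
  by have /(cycleP r rP)[] : occurs q r by rewrite /occurs qH.
- move=> nqB; have /(cycleP r rP)[_ nnqB] : occurs q r.
    by rewrite /occurs in_Bn nqB !orbT.
  by have := nf_lit_inj nP rP nqB nnqB erefl.
Qed.
End Forgettable.

Theorem theorem5 (A : choiceType) (P : program A) (q : A) :
  normal_form P -> forgettable q P -> fSP q P = NF (P3 q P).
Proof.
move=> nP [only_cycles|factP|no_cycle]; rewrite /fSP; congr NF.
- have [R0_eq0 R2_eq0 R14_eq0] := only_self_cycles_R_eq0 nP only_cycles.
  exact: P2_eq_P3_R0_R2_R14_eq0.
- by apply/P2_eq_P3_R3_eq0/R3_eq0 => // r; apply: fact_no_self_cycle.
- exact/P2_eq_P3_R3_eq0/R3_eq0.
Qed.
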